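(* For all $n,k\in\mathbb{N}$, $T(n,\omega\cdot k)\ge k^{n}$. Consequently $T(n,\omega\cdot k)=k^{n}$.
   Context: $\mathbb{N}=\{0,1,2,\dots\}$ and $[c]=\{1,\dots,c\}$; the convention $0^0=1$ is used. Each ordinal $\alpha$ is identified with the linearly ordered set of ordinals $\beta<\alpha$; $\omega\cdot k$ is the concatenation of $k$ copies of $\omega$ (elements $\omega\cdot b+a$ with $0\le b<k$, $a\in\mathbb{N}$). $\binom{S}{n}$ is the set of $n$-element subsets of $S$. $\approx$ denotes order-equivalence (existence of an order-preserving bijection). For a linearly ordered set $S$ and $n\in\mathbb{N}$, $T(n,S)$ is the least $t\in\mathbb{N}$ such that for every $c\ge 1$ and every coloring $\mathrm{COL}:\binom{S}{n}\to[c]$ there exists $S'\subseteq S$ with $S'\approx S$ and $|\mathrm{COL}(\binom{S'}{n})|\le t$; if no such $t$ exists, $T(n,S)=\infty$. *)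

From mathcomp Require Import all_boot.
Set Implicit Arguments. Unset Strict Implicit. Unset Printing Implicit Defensive.

(* A linearly ordered set is given as a subset S (a Prop-valued predicate) of a
   carrier X equipped with a strict order lt. *)

(* n-element subsets of A, represented (bijectively) as the lt-increasing
   sequences of length n with all entries in A. *)
Definition nsubset (X : eqType) (lt : rel X) (A : X -> Prop) (n : nat)
  (s : seq X) : Prop :=
  [/\ sorted lt s, size s = n & forall x, x \in s -> A x].

Definition order_equiv (X : eqType) (lt : rel X) (A' A : X -> Prop) : Prop :=
  exists f : X -> X,
    [/\ forall x, A x -> A' (f x),
        forall y, A' y -> exists2 x, A x & f x = y
      & forall x y, A x -> A y -> lt x y -> lt (f x) (f y)].

(* t is an admissible bound in the definition of T(n,S): every coloring
   COL : binom(S,n) -> [c] (c >= 1) has S' ⊆ S, S' ~ S, with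
   |COL(binom(S',n))| <= t (the image is covered by a list of length <= t). *)
Definition T_bound (X : eqType) (lt : rel X) (S : X -> Prop) (n t : nat) : Prop :=
  forall (c : nat), 1 <= c ->
  forall COL : seq X -> nat,
    (forall s, nsubset lt S n s -> 1 <= COL s <= c) ->
    exists S' : X -> Prop,
      [/\ forall x, S' x -> S x,
          order_equiv lt S' S
        & exists L : seq nat, size L <= t /\
            forall s, nsubset lt S' n s -> COL s \in L].

(* T(n,S) = t (finite): t is the least admissible bound. *)
Definition T_eq (X : eqType) (lt : rel X) (S : X -> Prop) (n t : nat) : Prop :=
  T_bound lt S n t /\ forall t', T_bound lt S n t' -> t <= t'.

(* The ordinal omega * k : the element omega*b + a is encoded as the pair (b, a)
   with b < k, ordered lexicographically. *)
Definition lexlt : rel (nat * nat) :=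
  fun p q => (p.1 < q.1) || ((p.1 == q.1) && (p.2 < q.2)).

Definition omega_times (k : nat) : nat * nat -> Prop := fun p => p.1 < k.

From mathcomp Require Import all_boot zify.
From Stdlib Require Import IndefiniteDescription Classical.
Set Implicit Arguments. Unset Strict Implicit. Unset Printing Implicit Defensive.

(** Read an n-subset of omega*k in increasing order of positions within the
  blocks; the sequence of blocks met is its block word, one of k^n words.
  Upper bound: by Ramsey's theorem, applied once for every word, there is an
  increasing H such that on the copy {(m mod k, H m)} of omega*k the colour of
  an n-subset depends only on its block word.  Lower bound: an order embedding
  of omega*k into itself maps each block cofinally into the same block, so
  every copy of omega*k realises every block word, and colouring n-subsets by
  their block word leaves k^n colours on every copy. *)

Lemma leq_incr (f : nat -> nat) : {homo f : x y / x < y} -> forall x, x <= f x.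
Proof. by move=> f_incr; elim=> // x IH; apply: leq_ltn_trans IH (f_incr _ _ _). Qed.

Lemma sorted_ltn_map (f : nat -> nat) s :
  {homo f : x y / x < y} -> sorted ltn (map f s) = sorted ltn s.
Proof.
move=> /leq_mono/leqW_mono f_mono; rewrite sorted_map.
by apply: eq_sorted => x y /=; rewrite f_mono.
Qed.

Lemma map_preimage (T : Type) (U : eqType) (f : T -> U) (r : seq U) :
  (forall y, y \in r -> exists x, f x = y) -> exists xs, map f xs = r.
Proof.
elim: r => [|y r IH] r_img; first by exists [::].
have [x <-] := r_img y (mem_head y r).
have [xs <-] : exists xs, map f xs = r.
  by apply: IH => z zr; apply: r_img; rewrite inE zr orbT.
by exists (x :: xs).
Qed.

Lemma bounded_infinitely_often C (c : nat -> nat) : (forall i, c i < C) ->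
  exists col, forall N, exists2 i, N <= i & c i = col.
Proof.
elim: C c => [|C IH] c c_lt; first by have := c_lt 0.
have [C_often|/not_all_ex_not[N0 C_rare]] :=
  classic (forall N, exists2 i, N <= i & c i = C); first by exists C.
have c_lt' i : c (i + N0) < C.
  rewrite ltn_neqAle -ltnS c_lt andbT; apply/eqP => ciC.
  by apply: C_rare; exists (i + N0); rewrite ?leq_addl.
have [col col_often] := IH _ c_lt'.
exists col => N; have [i le_Ni <-] := col_often N.
by exists (i + N0); rewrite ?(leq_trans le_Ni) ?leq_addr.
Qed.

Lemma incr_enum (P : nat -> Prop) : (forall N, exists2 i, N <= i & P i) ->
  exists2 h : nat -> nat, {homo h : x y / x < y} & forall p, P (h p).
Proof.
move=> P_often.
have [next next_spec] : exists next : nat -> nat, forall N, N <= next N /\ P (next N).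
  apply: (@functional_choice _ _ (fun N i => N <= i /\ P i)) => N.
  by have [i] := P_often N; exists i.
exists (fun p => iter p (fun i => next i.+1) (next 0)).
  by apply: (homo_ltn (r := fun a b => a < b) ltn_trans) => p; apply: (next_spec _).1.
by case=> [|p]; apply: (next_spec _).2.
Qed.

Definition homogeneous n (chi : seq nat -> nat) (h : nat -> nat) (col : nat) :=
  forall s, sorted ltn s -> size s = n -> chi (map h s) = col.

Lemma homogeneous_comp n chi h g col : {homo g : x y / x < y} ->
  homogeneous n chi h col -> homogeneous n chi (h \o g) col.
Proof.
move=> g_incr h_hom s s_sorted s_size.
by rewrite map_comp h_hom ?size_map ?sorted_ltn_map.
Qed.

Definition head_thinning n (chi : seq nat -> nat) (g : nat -> nat) (p : (nat -> nat) * nat) :=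
  [/\ {homo p.1 : x y / x < y}, forall x, 0 < p.1 x &
      homogeneous n (fun s => chi (g 0 :: map g s)) p.1 p.2].

Section RamseyStep.

Variables (n : nat) (chi : seq nat -> nat).
Variable thin : (nat -> nat) -> (nat -> nat) * nat.
Hypothesis thin_spec : forall g, head_thinning n chi g (thin g).

Fixpoint stage i : nat -> nat :=
  if i is i'.+1 then stage i' \o (thin (stage i')).1 else id.

Lemma stage_incr i : {homo stage i : x y / x < y}.
Proof.
elim: i => [//|i IH] x y /=; have [thin_incr _ _] := thin_spec (stage i).
by move=> /thin_incr/IH.
Qed.

Lemma stage_head_incr : {homo (fun i => stage i 0) : i j / i < j}.
Proof.
apply: (homo_ltn (r := fun a b => a < b) ltn_trans) => i /=; apply: stage_incr.
by have [_ thin_pos _] := thin_spec (stage i).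
Qed.

Lemma stage_image i d y : exists x, stage i.+1 x = stage (i.+1 + d) y.
Proof.
elim: d y => [|d IH] y; first by exists y; rewrite addn0.
have [x x_eq] := IH ((thin (stage (i.+1 + d))).1 y).
by exists x; rewrite x_eq addnS.
Qed.

Lemma stage_colour i s : sorted ltn s -> size s = n ->
  chi (stage i 0 :: map (stage i.+1) s) = (thin (stage i)).2.
Proof.
have [_ _ thin_hom] := thin_spec (stage i).
by move=> s_sorted s_size; rewrite /= map_comp; apply: thin_hom.
Qed.

Lemma homogeneous_stage_heads (idx : nat -> nat) col :
  {homo idx : x y / x < y} -> (forall p, (thin (stage (idx p))).2 = col) ->
  homogeneous n.+1 chi (fun p => stage (idx p) 0) col.
Proof.
move=> idx_incr idx_col [//|p r] /=; rewrite path_sortedE; last exact: ltn_trans.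
case/andP=> /allP p_lt r_sorted [r_size].
have heads_incr : {homo (fun q => stage (idx q) 0) : x y / x < y}.
  by move=> x y /idx_incr/stage_head_incr.
have [xs xs_r] : exists xs, map (stage (idx p).+1) xs = map (fun q => stage (idx q) 0) r.
  apply: map_preimage => y /mapP[q /p_lt/idx_incr/subnKC <- ->].
  exact: stage_image.
rewrite -xs_r -(idx_col p) stage_colour //.
  by rewrite -(sorted_ltn_map xs (stage_incr (idx p).+1)) xs_r (sorted_ltn_map _ heads_incr).
by rewrite -r_size -(size_map (stage (idx p).+1)) xs_r size_map.
Qed.

End RamseyStep.

Theorem ramsey n C (chi : seq nat -> nat) : (forall s, chi s < C) ->
  exists2 h : nat -> nat, {homo h : x y / x < y} & exists col, homogeneous n chi h col.
Proof.
elim: n C chi => [|n IH] C chi chi_lt.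
  by exists id => //; exists (chi [::]) => -[].
have [thin thin_spec] : exists thin, forall g, head_thinning n chi g (thin g).
  apply: (@functional_choice _ _ (head_thinning n chi)) => g.
  have [h h_incr [col h_hom]] :=
    IH C (fun s => chi (g 0 :: map g (map succn s))) (fun s => chi_lt _).
  exists (succn \o h, col); split=> //= s s_sorted s_size.
  by rewrite map_comp; apply: h_hom.
have colour_lt i : (thin (stage thin i)).2 < C.
  by rewrite -(stage_colour thin_spec i (iota_ltn_sorted 0 n)) ?size_iota.
have [col col_often] := bounded_infinitely_often colour_lt.
have [idx idx_incr idx_col] := incr_enum col_often.
exists (fun p => stage thin (idx p) 0); last first.
  by exists col; apply: homogeneous_stage_heads.
by move=> x y /idx_incr/(stage_head_incr thin_spec).
Qed.

Lemma ramsey_simultaneous n C (chi : seq nat -> seq nat -> nat) (ws : seq (seq nat)) :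
  (forall w t, chi w t < C) -> exists2 h : nat -> nat, {homo h : x y / x < y} &
  exists col : seq nat -> nat, forall w, w \in ws -> homogeneous n (chi w) h (col w).
Proof.
move=> chi_lt; elim: ws => [|w ws [h h_incr [col h_hom]]].
  by exists id => //; exists (fun=> 0).
have [g g_incr [c g_hom]] := ramsey n (fun t => chi_lt w (map h t)).
exists (h \o g); first by move=> x y /g_incr/h_incr.
exists (fun v => if v == w then c else col v) => v; rewrite inE.
case: eqP => [-> _|_ /h_hom]; last exact: homogeneous_comp.
by move=> t t_sorted t_size; rewrite map_comp; apply: g_hom.
Qed.

Fixpoint words (k n : nat) : seq (seq nat) :=
  if n is n'.+1 then [seq x :: w | x <- iota 0 k, w <- words k n'] else [:: [::]].

Lemma size_words k n : size (words k n) = k ^ n.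
Proof. by elim: n => [|n IH] //=; rewrite size_allpairs size_iota IH expnS. Qed.

Lemma uniq_words k n : uniq (words k n).
Proof.
elim: n => [|n IH] //=; apply: allpairs_uniq => //; first exact: iota_uniq.
by move=> [x v] [y w] _ _ /= [-> ->].
Qed.

Lemma mem_words k n w : (w \in words k n) = (size w == n) && all (fun j => j < k) w.
Proof.
elim: n w => [|n IH] [|j w] //=.
  by apply/negbTE/negP => /allpairsP[[a b] [_ _]].
apply/allpairsP/idP => [[[a b] [/= a_k b_in [-> ->]]]|/andP[w_size /andP[j_k w_k]]].
  by move: b_in; rewrite IH mem_iota /= in a_k *; rewrite eqSS a_k.
by exists (j, w); rewrite /= mem_iota IH j_k -(eqSS (size w)) w_size w_k.
Qed.

Definition lexle : rel (nat * nat) :=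
  fun p q => (p.1 < q.1) || ((p.1 == q.1) && (p.2 <= q.2)).

Lemma lexle_total : total lexle.
Proof. by move=> [a b] [c d]; rewrite /lexle /=; apply/orP; lia. Qed.

Lemma lexle_trans : transitive lexle.
Proof. by move=> [a b] [c d] [e g]; rewrite /lexle /= => /orP ? /orP ?; apply/orP; lia. Qed.

Lemma lexle_anti : antisymmetric lexle.
Proof.
move=> [a b] [c d]; rewrite /lexle /= => /andP[/orP ? /orP ?].
by apply/eqP; rewrite xpair_eqE; apply/andP; lia.
Qed.

Lemma lexlt_trans : transitive lexlt.
Proof. by move=> [a b] [c d] [e g]; rewrite /lexlt /= => /orP ? /orP ?; apply/orP; lia. Qed.

Lemma lexlt_neqAle p q : lexlt p q = (p != q) && lexle p q.
Proof.
case: p q => [a b] [c d]; rewrite /lexlt /lexle xpair_eqE /=.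
by apply/orP/andP => [?|[/nandP ? /orP ?]]; [split; [apply/nandP|apply/orP]|]; lia.
Qed.

Lemma lexlt_fst p q : lexlt p q -> p.1 <= q.1.
Proof. by case: p q => [a b] [c d]; rewrite /lexlt /= => /orP; lia. Qed.

Lemma lexlt_snd p q : lexlt p q -> p.1 = q.1 -> p.2 < q.2.
Proof. by case: p q => [a b] [c d]; rewrite /lexlt /= => /orP; lia. Qed.

Lemma lexlt_sorted_uniq_lexle s : sorted lexlt s = uniq s && sorted lexle s.
Proof.
rewrite (sorted_pairwise lexle_trans) (sorted_pairwise lexlt_trans) uniq_pairwise.
by rewrite -pairwise_relI; apply/eq_pairwise => ? ?; rewrite lexlt_neqAle.
Qed.

Lemma nsubset_sub (X : eqType) (lt : rel X) (A B : X -> Prop) n s :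
  (forall x, A x -> B x) -> nsubset lt A n s -> nsubset lt B n s.
Proof. by move=> AB [s_sorted s_size s_A]; split=> // x /s_A/AB. Qed.

Section OmegaTimesEmbedding.

Variables (k : nat) (f : nat * nat -> nat * nat).
Hypothesis f_in : forall x, omega_times k x -> omega_times k (f x).
Hypothesis f_incr : forall x y,
  omega_times k x -> omega_times k y -> lexlt x y -> lexlt (f x) (f y).

Lemma embed_same_block j i i' : j < k -> i < i' -> lexlt (f (j, i)) (f (j, i')).
Proof. by move=> j_k i_i'; apply: f_incr; rewrite // /lexlt /= ltnn eqxx. Qed.

Lemma embed_next_block j i i' : j.+1 < k -> lexlt (f (j, i)) (f (j.+1, i')).
Proof. by move=> j_k; apply: f_incr; rewrite /omega_times /lexlt /= ?ltnSn ?(ltnW j_k). Qed.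

Lemma embed_block_mono j i : j < k -> (f (j, 0)).1 <= (f (j, i)).1.
Proof. by case: i => // i j_k; apply/lexlt_fst/embed_same_block. Qed.

(* Otherwise the block images f (j, i + m), m >= 0, would form an increasing
   sequence inside the block of f (j.+1, 0), below that point. *)
Lemma embed_block_lt_next j i : j.+1 < k -> (f (j, i)).1 < (f (j.+1, 0)).1.
Proof.
move=> j_k; rewrite ltnNge; apply/negP => block_ge.
set b := f (j.+1, 0).
have j_k' : j < k by apply: ltnW.
have block_eq m : (f (j, i + m)).1 = b.1.
  apply/eqP; rewrite eqn_leq (lexlt_fst (embed_next_block _ _ j_k)) (leq_trans block_ge) //.
  by case: m => [|m]; rewrite ?addn0 // lexlt_fst // embed_same_block //; lia.
have pos_ge m : m <= (f (j, i + m)).2.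
  apply: (@leq_incr (fun m => (f (j, i + m)).2)) => x y x_y.
  by apply: lexlt_snd; rewrite ?block_eq // embed_same_block // ltn_add2l.
have := lexlt_snd (embed_next_block (i + b.2) 0 j_k) (block_eq _).
by rewrite ltnNge pos_ge.
Qed.

Lemma embed_block_ge j i : j < k -> j <= (f (j, i)).1.
Proof.
elim: j i => // j IH i j_k.
apply: leq_trans (embed_block_mono i j_k).
exact: leq_ltn_trans (IH 0 (ltnW j_k)) (embed_block_lt_next 0 j_k).
Qed.

Lemma embed_block_le j i : j < k -> (f (j, i)).1 <= j.
Proof.
have gap d : forall j i, j + d < k -> (f (j, i)).1 + d < k.
  elim: d => [|d IH] j' i' jd_k.
    by rewrite addn0 in jd_k; rewrite addn0; apply: (@f_in (j', i') jd_k).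
  have next_k : (f (j'.+1, 0)).1 + d < k by apply: IH; rewrite addSn -addnS.
  have : (f (j', i')).1 < (f (j'.+1, 0)).1 by apply: embed_block_lt_next; lia.
  lia.
by move=> j_k; have := gap (k.-1 - j) j i; lia.
Qed.

Lemma embed_block j i : j < k -> (f (j, i)).1 = j.
Proof. by move=> j_k; apply/eqP; rewrite eqn_leq embed_block_le ?embed_block_ge. Qed.

Lemma embed_pos_ge j i : j < k -> i <= (f (j, i)).2.
Proof.
move=> j_k; apply: (@leq_incr (fun i => (f (j, i)).2)) => x y x_y.
by apply: lexlt_snd; rewrite ?embed_block // embed_same_block.
Qed.

End OmegaTimesEmbedding.

Lemma omega_times_copy_cofinal k (S : nat * nat -> Prop) :
  (forall x, S x -> omega_times k x) -> order_equiv lexlt S (omega_times k) ->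
  forall j N, j < k -> exists x, [/\ S x, x.1 = j & N <= x.2].
Proof.
move=> S_sub [f [f_S _ f_incr]] j N j_k.
have f_in x : omega_times k x -> omega_times k (f x) by move=> /f_S/S_sub.
exists (f (j, N)); split; first exact: (f_S (j, N)).
  exact: (embed_block f_in f_incr).
exact: (embed_pos_ge f_in f_incr).
Qed.

Definition block_word (s : seq (nat * nat)) : seq nat :=
  [seq p.2 | p <- sort lexle [seq (p.2, p.1) | p <- s]].

Lemma block_word_perm s1 s2 : perm_eq s1 s2 -> block_word s1 = block_word s2.
Proof.
move=> /(perm_map (fun p => (p.2, p.1))).
by move=> /(perm_sortP lexle_total lexle_trans lexle_anti) eq_sort; rewrite /block_word eq_sort.
Qed.

Lemma block_word_sorted s : sorted ltn (map snd s) -> block_word s = map fst s.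
Proof.
rewrite /block_word sorted_map => s_sorted; rewrite sorted_sort -?map_comp //.
  exact: lexle_trans.
by rewrite sorted_map; apply: sub_sorted s_sorted => p q /= lt_pq; rewrite /lexle lt_pq.
Qed.

Lemma chain_in_blocks k (S : nat * nat -> Prop) :
  (forall j N, j < k -> exists x, [/\ S x, x.1 = j & N <= x.2]) ->
  forall w N, all (fun j => j < k) w -> exists P : seq (nat * nat),
    [/\ map fst P = w, sorted ltn (map snd P), all (fun p => N <= p.2) P &
        forall p, p \in P -> S p].
Proof.
move=> S_cof; elim=> [|j w IH] N /=; first by exists [::].
case/andP=> j_k w_k; have [x [Sx <- N_x]] := S_cof j N j_k.
have [P [<- P_sorted P_ge P_S]] := IH x.2.+1 w_k.
exists (x :: P); split=> //=.
- by rewrite path_sortedE ?P_sorted ?andbT ?all_map; [exact: P_ge | exact: ltn_trans].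
- by rewrite N_x; apply: sub_all P_ge => p /=; lia.
- by move=> p; rewrite inE => /orP[/eqP->|/P_S].
Qed.

Lemma realise_block_word k n (S : nat * nat -> Prop) :
  (forall j N, j < k -> exists x, [/\ S x, x.1 = j & N <= x.2]) ->
  forall w, w \in words k n -> exists s, nsubset lexlt S n s /\ block_word s = w.
Proof.
move=> S_cof w; rewrite mem_words => /andP[/eqP w_size w_k].
have [P [P_fst P_sorted _ P_S]] := chain_in_blocks S_cof 0 w_k.
have P_uniq : uniq P.
  by apply: (@map_uniq _ _ snd); apply: (sorted_uniq ltn_trans ltnn P_sorted).
exists (sort lexle P); split; last first.
  by rewrite (block_word_perm (permEl (perm_sort _ _))) block_word_sorted.
split.
- by rewrite lexlt_sorted_uniq_lexle sort_uniq P_uniq sort_sorted //; apply: lexle_total.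
- by rewrite size_sort -w_size -P_fst size_map.
- by move=> x; rewrite mem_sort => /P_S.
Qed.

Lemma leq_T_bound_omega_times n k t : T_bound lexlt (omega_times k) n t -> k ^ n <= t.
Proof.
move=> T_t; set W := words k n.
have [|S [S_sub S_equiv [L [L_size L_col]]]] :=
  T_t (k ^ n).+1 erefl (fun s => (index (block_word s) W).+1).
  by move=> s _; rewrite /= ltnS -(size_words k n) index_size.
have W_col : {subset [seq (index w W).+1 | w <- W] <= L}.
  move=> y /mapP[w w_in ->].
  have [s [s_S <-]] := realise_block_word (omega_times_copy_cofinal S_sub S_equiv) w_in.
  exact: L_col.
apply: leq_trans L_size; rewrite -(size_words k n) -(size_map (fun w => (index w W).+1)).
apply: uniq_leq_size W_col; rewrite map_inj_in_uniq ?uniq_words // => v w vW wW [].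
exact: index_inj.
Qed.

(* The guard x.1 < k only matters for k = 0, where m %% 0 = m. *)
Definition thin_copy k (H : nat -> nat) : nat * nat -> Prop :=
  fun x => x.1 < k /\ exists m, x = (m %% k, H m).

Lemma thin_copy_equiv k H : {homo H : x y / x < y} ->
  order_equiv lexlt (thin_copy k H) (omega_times k).
Proof.
move=> H_incr; exists (fun p => (p.1, H (p.2 * k + p.1))); split.
- move=> [j i] /= j_k; split=> //; exists (i * k + j).
  by rewrite modnMDl modn_small.
- move=> y [j_k [m y_m]]; subst y; exists (m %% k, m %/ k) => //.
  by rewrite /= -divn_eq.
- move=> [j i] [j' i'] /= j_k _; rewrite /lexlt /= => /orP[-> //|/andP[/eqP <- i_i']].
  by rewrite ltnn eqxx H_incr // ltn_add2r ltn_pmul2r // (leq_ltn_trans (leq0n j) j_k).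
Qed.

Lemma thin_copy_nsubset k H n s : {homo H : x y / x < y} ->
  nsubset lexlt (thin_copy k H) n s -> exists t, [/\ sorted ltn t, size t = n,
    [seq m %% k | m <- t] \in words k n &
    s = sort lexle (zip [seq m %% k | m <- t] (map H t))].
Proof.
move=> H_incr [s_sorted s_size s_thin].
have [t0 t0_s] : exists t0, [seq (m %% k, H m) | m <- t0] = s.
  by apply: map_preimage => x /s_thin[_ [m ->]]; exists m.
move: s_sorted; rewrite lexlt_sorted_uniq_lexle => /andP[s_uniq s_lexle].
have t0_uniq : uniq t0 by move: s_uniq; rewrite -t0_s => /map_uniq.
set t := sort leq t0.
have t_perm : perm_eq t t0 := permEl (perm_sort leq t0).
have s_t : perm_eq s [seq (m %% k, H m) | m <- t] by rewrite -t0_s perm_map // perm_sym.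
have t_size : size t = n by rewrite (perm_size t_perm) -s_size -t0_s size_map.
exists t; split=> //.
- by rewrite ltn_sorted_uniq_leq (perm_uniq t_perm) t0_uniq sort_sorted //; apply: leq_total.
- rewrite mem_words size_map t_size eqxx; apply/allP => _ /mapP[m m_t ->].
  have : (m %% k, H m) \in s by rewrite (perm_mem s_t) map_f.
  by case/s_thin.
- rewrite zip_map -(sorted_sort lexle_trans s_lexle).
  exact/(perm_sortP lexle_total lexle_trans lexle_anti).
Qed.

Lemma T_bound_omega_times n k : T_bound lexlt (omega_times k) n (k ^ n).
Proof.
move=> c _ COL COL_range.
(* Capping by c makes the colouring bounded everywhere, not only on n-subsets. *)
pose chi w t := minn (COL (sort lexle (zip w t))) c.
have chi_lt w t : chi w t < c.+1 by rewrite ltnS geq_minr.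
have [H H_incr [col H_hom]] := ramsey_simultaneous n (words k n) chi_lt.
exists (thin_copy k H); split; first by move=> x [].
  exact: thin_copy_equiv.
exists (map col (words k n)); split; first by rewrite size_map size_words.
move=> s s_thin; have [t [t_sorted t_size w_in s_eq]] := thin_copy_nsubset H_incr s_thin.
have s_omega : nsubset lexlt (omega_times k) n s by apply: nsubset_sub s_thin => x [].
have /andP[_ COL_le] := COL_range s s_omega.
suff -> : COL s = col [seq m %% k | m <- t] by rewrite map_f.
by rewrite -(H_hom _ w_in t t_sorted t_size) /chi -s_eq (minn_idPl COL_le).
Qed.

Theorem theorem5p2 (n k : nat) :
  (forall t, T_bound lexlt (omega_times k) n t -> k ^ n <= t) /\
  T_eq lexlt (omega_times k) n (k ^ n).
Proof.
split; first exact: leq_T_bound_omega_times.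
by split; [apply: T_bound_omega_times | apply: leq_T_bound_omega_times].
Qed.
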